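(* Let $q=3^m$ with $m\ge1$, let $\alpha\in\mathbb{F}_q$ be a non-square, and let $Z\in\mathbb{F}_{q^2}\setminus\mathbb{F}_q$ with $Z^2=\alpha$. Let $f(x)=x^{q+2}$ on $\mathbb{F}_{q^2}$ and for $b\in\mathbb{F}_{q^2}$ put $\beta(b)=\beta_f(1,\tfrac14 b)$. Then: (1) for every $c\in\mathbb{F}_q^*$, $\beta(c)=q+2$ if $c^2+1\in C_1$ and $\beta(c)=q$ otherwise; (2) for every $d\in\mathbb{F}_q^*$, $\beta(dZ)=1$; in particular $\nu_1>0$; (3) for all $c,d\in\mathbb{F}_q^*$, $\beta(c+dZ)\in\{0,1,2,5\}$.
   Context: $\beta_f(a,b)$ is the number of $(x,y)\in\mathbb{F}_{q^2}^2$ with $f(x)-f(y)=b$ and $f(x+a)-f(y+a)=b$. For the power function $f$, $\nu_i=\#\{b\in\mathbb{F}_{q^2}^*:\ \beta_f(1,b)=i\}$. $C_0$ (resp. $C_1$) denotes the set of nonzero squares (resp. non-squares) in $\mathbb{F}_q^*$. *)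

From mathcomp Require Import all_boot all_order all_algebra.
Set Implicit Arguments. Unset Strict Implicit. Unset Printing Implicit Defensive.
Import GRing.Theory.
Local Open Scope ring_scope.

Section Defs.
Context {F : finFieldType}.

Definition inFq (q : nat) (x : F) : bool := x ^+ q == x.

Definition sqFq (q : nat) (x : F) : bool := [exists y : F, inFq q y && (y ^+ 2 == x)].

Definition C0 (q : nat) : {set F} := [set x | [&& inFq q x, x != 0 & sqFq q x]].
Definition C1 (q : nat) : {set F} := [set x | [&& inFq q x, x != 0 & ~~ sqFq q x]].

Definition Fqstar (q : nat) : {set F} := [set x | inFq q x && (x != 0)].

Definition betaf (f : F -> F) (a b : F) : nat :=
  #|[set xy : F * F | (f xy.1 - f xy.2 == b) && (f (xy.1 + a) - f (xy.2 + a) == b)]|.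

Definition nu (f : F -> F) (i : nat) : nat :=
  #|[set b : F | (b != 0) && (betaf f 1 b == i)]|.
End Defs.

From HB Require Import structures.
From mathcomp Require Import all_boot all_order all_algebra all_field.
From mathcomp Require Import ring.
Import GRing.Theory.
Local Open Scope ring_scope.
Set Implicit Arguments. Unset Strict Implicit. Unset Printing Implicit Defensive.

(* The pairs counted by beta(b) satisfy g(x) = g(y) for g(x) = f(x + 1) - f(x)
   = 1 - (x - 1)(x^q - x), which forces either x, y in F_q, where f is the cube
   map (additive in characteristic 3) and contributes the q pairs with
   (x - y)^3 = b when b is in F_q, or y = -1 - x with x outside F_q and
   f(x) + f(x + 1) = b.  Writing x = 1 + a + cZ turns the last equation into
   two equations over F_q: for b = c0 they have 2 or 0 solutions according as
   c0^2 + 1 is a non-square, for b = dZ exactly one (c |-> alpha c^3 - c is a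
   bijection of F_q), and for b = c0 + dZ their solutions correspond to the
   roots n = a^2 - alpha c^2 in F_q of the quintic
   (n^3 - c0^2)(n + 1)^2 + alpha d^2 n^2.  This quintic has discriminant
   c0^2 (alpha d^2)^4, a nonzero square of F_q; so once three of its roots lie
   in F_q, the discriminant of the remaining quadratic factor is a square of
   F_q too, and all five roots lie in F_q. *)

Lemma neqrN (F : fieldType) (x : F) : 2%:R != 0 :> F -> x != 0 -> x != - x.
Proof.
move=> two_nz x_nz; apply: contraNneq two_nz => xN.
have : x * 2%:R == 0 by rewrite mulr_natr mulr2n {2}xN subrr.
by rewrite mulf_eq0 (negPf x_nz).
Qed.

Lemma card_sqr_imset (F : finFieldType) (A : {set F}) :
  2%:R != 0 :> F -> 0 \notin A -> {in A, forall y, - y \in A} ->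
  #|A| = (2 * #|[set y ^+ 2 | y in A]|)%N.
Proof.
move=> two_nz A0 AN; rewrite -sum1_card.
rewrite (partition_big (fun y => y ^+ 2) [in [set y ^+ 2 | y in A]]); last first.
  by move=> y Ay; apply/imsetP; exists y.
rewrite mulnC -sum_nat_const; apply: eq_bigr => _ /imsetP[y Ay ->].
have y_nz : y != 0 by apply: contraNneq A0 => <-.
rewrite sum1dep_card (_ : [set x | _] = [set y; - y]); last first.
  apply/setP=> x; rewrite !inE eqf_sqr; apply/andP/idP=> [[] //|xy].
  by split=> //; case/orP: xy => /eqP->; rewrite ?AN.
by rewrite cards2 neqrN.
Qed.

Lemma quadratic_eq0 (R : idomainType) (a2 a1 a0 r1 r2 r3 : R) :
  r1 != r2 -> r1 != r3 -> r2 != r3 ->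
  a2 * r1 ^+ 2 + a1 * r1 + a0 = 0 -> a2 * r2 ^+ 2 + a1 * r2 + a0 = 0 ->
  a2 * r3 ^+ 2 + a1 * r3 + a0 = 0 -> [/\ a2 = 0, a1 = 0 & a0 = 0].
Proof.
move=> n12 n13 n23 e1 e2 e3.
have slope r r' : r != r' -> a2 * r ^+ 2 + a1 * r + a0 = a2 * r' ^+ 2 + a1 * r' + a0 ->
    a2 * (r + r') + a1 = 0.
  move=> nrr' e; apply: (mulfI (_ : r - r' != 0)); first by rewrite subr_eq0.
  transitivity (a2 * r ^+ 2 + a1 * r + a0 - (a2 * r' ^+ 2 + a1 * r' + a0)); first ring.
  by rewrite e subrr mulr0.
have s12 := slope _ _ n12 (etrans e1 (esym e2)).
have s13 := slope _ _ n13 (etrans e1 (esym e3)).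
have a2_0 : a2 = 0.
  apply: (mulIf (_ : r2 - r3 != 0)); first by rewrite subr_eq0.
  by rewrite mul0r -[RHS](subrr 0) -{1}s12 -s13; ring.
have a1_0 : a1 = 0 by rewrite -s12 a2_0; ring.
by split=> //; rewrite -e1 a2_0 a1_0; ring.
Qed.

Lemma in_onto_of_inj (T : finType) (S : {set T}) (g : T -> T) :
  {in S, forall x, g x \in S} -> {in S &, injective g} ->
  {in S, forall y, exists2 x, x \in S & g x = y}.
Proof.
move=> gS g_inj y; have gSS : g @: S = S.
  apply/eqP; rewrite eqEcard card_in_imset // leqnn andbT.
  by apply/subsetP=> _ /imsetP[x xS ->]; apply: gS.
by rewrite -{1}gSS => /imsetP[x xS ->]; exists x.
Qed.

Lemma card_gt2_distinct (T : finType) (A : {set T}) : (2 < #|A|)%N ->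
  exists r1 r2 r3, [/\ r1 \in A, r2 \in A, r3 \in A & [&& r1 != r2, r1 != r3 & r2 != r3]].
Proof.
move=> A_gt2; have [r1 r1A] : exists r1, r1 \in A by apply/card_gt0P; exact: leq_trans _ A_gt2.
have [r2] : exists r2, r2 \in A :\ r1.
  by apply/card_gt0P; move: A_gt2; rewrite (cardsD1 r1 A) r1A add1n ltnS; apply: ltnW.
rewrite !inE => /andP[r21 r2A].
have [r3] : exists r3, r3 \in A :\ r1 :\ r2.
  apply/card_gt0P; move: A_gt2.
  by rewrite (cardsD1 r1 A) r1A (cardsD1 r2 (A :\ r1)) !inE r21 r2A !add1n.
rewrite !inE => /and3P[r32 r31 r3A].
by exists r1, r2, r3; rewrite eq_sym r21 eq_sym r31 eq_sym r32.
Qed.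

Lemma deriv_root_factor (R : comNzRingType) (p q : {poly R}) r :
  p = ('X - r%:P) * q -> p^`().[r] = q.[r].
Proof. by move->; rewrite derivM derivXsubC !hornerE subrr mul0r addr0. Qed.

(* [ring] ignores the characteristic: identities of characteristic 3 are proved
   by exhibiting the multiple of 3 by which the two sides differ. *)
Lemma eq_char3 (R : pzRingType) (x y w : R) : 3%:R = 0 :> R -> x = y + 3%:R * w -> x = y.
Proof. by move=> natr3 ->; rewrite natr3 mul0r addr0. Qed.

Section CharacteristicThree.
Variable F : fieldType.
Hypothesis natr3 : 3%:R = 0 :> F.

Let polyC_natr3 : 3%:R = 0 :> {poly F}.
Proof. by rewrite -polyC_natr natr3. Qed.

Definition quintic (C A : F) : {poly F} := ('X^3 - C%:P) * ('X + 1) ^+ 2 + A%:P * 'X^2.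

Lemma horner_quintic C A n : (quintic C A).[n] = (n ^+ 3 - C) * (n + 1) ^+ 2 + A * n ^+ 2.
Proof. by rewrite !hornerE. Qed.

Lemma quintic_deriv C A : ('X + 1) * (quintic C A)^`() = - (quintic C A + A%:P * 'X).
Proof.
apply: (eq_char3 polyC_natr3
  (w := 'X^2 * ('X + 1) ^+ 3 + ('X^3 - C%:P) * ('X + 1) ^+ 2 + A%:P * 'X^2 + A%:P * 'X)).
by rewrite /quintic !derivE /=; ring.
Qed.

Lemma quintic_root_cofactor C A r p : quintic C A = ('X - r%:P) * p -> (r + 1) * p.[r] = - A * r.
Proof.
move=> pE; have pr : (quintic C A).[r] = 0 by rewrite pE hornerM hornerXsubC subrr mul0r.
have /(congr1 (fun p => p.[r])) := quintic_deriv C A.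
by rewrite hornerM hornerN (hornerD (quintic C A)) pr (deriv_root_factor pE) !hornerE => ->; ring.
Qed.

(* The cofactor is read off from the coefficients of X^4 and X^3, computed over
   the integers: u is the characteristic-3 value r1 + r2 + r3 - 1. *)
Lemma quintic_factor3 C A r1 r2 r3 : r1 != r2 -> r1 != r3 -> r2 != r3 ->
  root (quintic C A) r1 -> root (quintic C A) r2 -> root (quintic C A) r3 ->
  let u := r1 + r2 + r3 + 2%:R in
  let v := 1 + (r1 + r2 + r3) * u - (r1 * r2 + r1 * r3 + r2 * r3) in
  quintic C A = ('X - r1%:P) * ('X - r2%:P) * ('X - r3%:P) * ('X^2 + u%:P * 'X + v%:P).
Proof.
move=> n12 n13 n23 /eqP p1 /eqP p2 /eqP p3 u v.
pose e1 := r1 + r2 + r3; pose e2 := r1 * r2 + r1 * r3 + r2 * r3; pose e3 := r1 * r2 * r3.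
pose a2 := A - C + e1 * v - e2 * u + e3; pose a1 := - 2%:R * C - e2 * v + e3 * u.
pose a0 := e3 * v - C.
have diffE : quintic C A - ('X - r1%:P) * ('X - r2%:P) * ('X - r3%:P) * ('X^2 + u%:P * 'X + v%:P)
    = a2%:P * 'X^2 + a1%:P * 'X + a0%:P.
  by rewrite /quintic /a2 /a1 /a0 /v /u /e1 /e2 /e3; ring.
have at_root r : r \in [:: r1; r2; r3] -> (quintic C A).[r] = 0 -> a2 * r ^+ 2 + a1 * r + a0 = 0.
  move=> r_in pr; have /(congr1 (fun p => p.[r])) := diffE.
  rewrite hornerD hornerN pr !hornerE.
  by move: r_in; rewrite !inE => /or3P[] /eqP->; rewrite !subrr ?(mulr0, mul0r) oppr0 => /esym.
have z1 := at_root r1 (mem_head _ _) p1.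
have z2 : a2 * r2 ^+ 2 + a1 * r2 + a0 = 0 by apply: at_root p2; rewrite !inE eqxx orbT.
have z3 : a2 * r3 ^+ 2 + a1 * r3 + a0 = 0 by apply: at_root p3; rewrite !inE eqxx !orbT.
have [a2_0 a1_0 a0_0] := quadratic_eq0 n12 n13 n23 z1 z2 z3.
by apply/eqP; rewrite -subr_eq0 diffE a2_0 a1_0 a0_0 !mul0r !addr0.
Qed.

Lemma quadratic_split (u v w : F) : w ^+ 2 = u ^+ 2 - v ->
  'X^2 + u%:P * 'X + v%:P = ('X - (u + w)%:P) * ('X - (u - w)%:P).
Proof.
move=> w2; have w2P : w%:P ^+ 2 = u%:P ^+ 2 - v%:P by rewrite -polyC_exp w2 polyCB polyC_exp.
by apply: (eq_char3 polyC_natr3 (w := u%:P * 'X)); rewrite !polyCD !polyCN; ring: w2P.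
Qed.

Definition discr5 (r1 r2 r3 r4 r5 : F) :=
  ((r1 - r2) * (r1 - r3) * (r1 - r4) * (r1 - r5) * (r2 - r3) * (r2 - r4) * (r2 - r5)
   * (r3 - r4) * (r3 - r5) * (r4 - r5)) ^+ 2.

Lemma discr5_uniq r1 r2 r3 r4 r5 : discr5 r1 r2 r3 r4 r5 != 0 -> uniq [:: r1; r2; r3; r4; r5].
Proof.
move=> D_nz; rewrite /= !inE !negb_or !andbT.
do !(apply/andP; split); apply: contraNneq D_nz => ->.
all: by rewrite /discr5 subrr ?(mul0r, mulr0) expr0n.
Qed.

(* (X + 1) P' = - (P + A X) gives (r + 1) P'(r) = - A r at every root r;
   multiply over the roots, using prod r = C and prod (r + 1) = - A. *)
Lemma quintic_discr C A r1 r2 r3 r4 r5 : A != 0 ->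
  quintic C A = ('X - r1%:P) * ('X - r2%:P) * ('X - r3%:P) * ('X - r4%:P) * ('X - r5%:P) ->
  discr5 r1 r2 r3 r4 r5 = C * A ^+ 4.
Proof.
move=> A_nz pE.
have d1 : (r1 + 1) * ((r1 - r2) * (r1 - r3) * (r1 - r4) * (r1 - r5)) = - A * r1.
  rewrite -(quintic_root_cofactor (C := C)
    (p := ('X - r2%:P) * ('X - r3%:P) * ('X - r4%:P) * ('X - r5%:P)));
    by rewrite ?hornerM ?hornerXsubC // pE; ring.
have d2 : (r2 + 1) * ((r2 - r1) * (r2 - r3) * (r2 - r4) * (r2 - r5)) = - A * r2.
  rewrite -(quintic_root_cofactor (C := C)
    (p := ('X - r1%:P) * ('X - r3%:P) * ('X - r4%:P) * ('X - r5%:P)));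
    by rewrite ?hornerM ?hornerXsubC // pE; ring.
have d3 : (r3 + 1) * ((r3 - r1) * (r3 - r2) * (r3 - r4) * (r3 - r5)) = - A * r3.
  rewrite -(quintic_root_cofactor (C := C)
    (p := ('X - r1%:P) * ('X - r2%:P) * ('X - r4%:P) * ('X - r5%:P)));
    by rewrite ?hornerM ?hornerXsubC // pE; ring.
have d4 : (r4 + 1) * ((r4 - r1) * (r4 - r2) * (r4 - r3) * (r4 - r5)) = - A * r4.
  rewrite -(quintic_root_cofactor (C := C)
    (p := ('X - r1%:P) * ('X - r2%:P) * ('X - r3%:P) * ('X - r5%:P)));
    by rewrite ?hornerM ?hornerXsubC // pE; ring.
have d5 : (r5 + 1) * ((r5 - r1) * (r5 - r2) * (r5 - r3) * (r5 - r4)) = - A * r5.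
  rewrite -(quintic_root_cofactor (C := C)
    (p := ('X - r1%:P) * ('X - r2%:P) * ('X - r3%:P) * ('X - r4%:P)));
    by rewrite ?hornerM ?hornerXsubC // pE; ring.
have prod_roots : r1 * r2 * r3 * r4 * r5 = C.
  have /(congr1 (fun p => p.[0])) := pE; rewrite horner_quintic !hornerM !hornerXsubC => at0.
  transitivity (- ((0 - r1) * (0 - r2) * (0 - r3) * (0 - r4) * (0 - r5))); first ring.
  by rewrite -at0; ring.
have prod_succ_roots : (r1 + 1) * (r2 + 1) * (r3 + 1) * (r4 + 1) * (r5 + 1) = - A.
  have /(congr1 (fun p => p.[-1])) := pE; rewrite horner_quintic !hornerM !hornerXsubC => at_m1.
  transitivity (- ((-1 - r1) * (-1 - r2) * (-1 - r3) * (-1 - r4) * (-1 - r5))); first ring.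
  by rewrite -at_m1; ring.
apply: (mulfI (_ : - A != 0)); first by rewrite oppr_eq0.
rewrite -[in LHS]prod_succ_roots.
transitivity ((r1 + 1) * ((r1 - r2) * (r1 - r3) * (r1 - r4) * (r1 - r5))
  * ((r2 + 1) * ((r2 - r1) * (r2 - r3) * (r2 - r4) * (r2 - r5)))
  * ((r3 + 1) * ((r3 - r1) * (r3 - r2) * (r3 - r4) * (r3 - r5)))
  * ((r4 + 1) * ((r4 - r1) * (r4 - r2) * (r4 - r3) * (r4 - r5)))
  * ((r5 + 1) * ((r5 - r1) * (r5 - r2) * (r5 - r3) * (r5 - r4)))); first by rewrite /discr5; ring.
by rewrite d1 d2 d3 d4 d5 -prod_roots; ring.
Qed.

End CharacteristicThree.

(* Assumptions are tried first, so that a hypothesis [Z ^+ 2 \in S] is used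
   before [rpredX] would reduce the goal to the false [Z \in S]. *)
Ltac rpred_auto := repeat first [ eassumption | rewrite rpredN | rewrite rpredV
  | apply: rpredD | apply: rpredB | apply: rpredM | apply: rpredX | apply: rpred1
  | apply: rpred0 | apply: rpred_nat ].

Section FrobeniusSubfield.
Variables (F : finFieldType) (q : nat).
Hypotheses (q_pchar : [pchar F].-nat q) (card_F : #|F| = (q ^ 2)%N).
Local Notation Fq := (@inFq F q).

Lemma inFqE x : (x \in Fq) = (x ^+ q == x). Proof. by []. Qed.

Lemma frobD (x y : F) : (x + y) ^+ q = x ^+ q + y ^+ q.
Proof. exact: exprDn_pchar. Qed.

Lemma frobN (x : F) : (- x) ^+ q = - x ^+ q.
Proof. exact: exprNn_pchar. Qed.

Lemma inFq_divring_closed : GRing.divring_closed Fq.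
Proof.
split=> [|x y|x y]; rewrite ?inFqE ?expr1n //.
- by move=> /eqP xq /eqP yq; rewrite frobD frobN xq yq.
- by move=> /eqP xq /eqP yq; rewrite exprMn exprVn xq yq.
Qed.

HB.instance Definition _ := GRing.isDivringClosed.Build F Fq inFq_divring_closed.

Lemma inFqstar x : (x \in Fqstar q) = (x \in Fq) && (x != 0).
Proof. by rewrite inE. Qed.

Lemma inC1 x : (x \in C1 q) = [&& x \in Fq, x != 0 & ~~ sqFq q x].
Proof. by rewrite inE. Qed.

Lemma frobK (x : F) : x ^+ q ^+ q = x.
Proof. by rewrite -exprM mulnn -card_F expf_card. Qed.

Section QuadraticExtension.
Variable Z : F.
Hypotheses (Z_notin_Fq : Z \notin Fq) (sqrZ_in_Fq : Z ^+ 2 \in Fq).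

Lemma frobZ : Z ^+ q = - Z.
Proof.
have : Z ^+ q ^+ 2 == Z ^+ 2 by rewrite -exprM mulnC exprM (eqP sqrZ_in_Fq).
by rewrite eqf_sqr -inFqE (negPf Z_notin_Fq) => /eqP.
Qed.

Lemma Z_neq0 : Z != 0.
Proof. by apply: contraNneq Z_notin_Fq => ->; apply: rpred0. Qed.

Lemma two_neq0 : 2%:R != 0 :> F.
Proof.
apply: contra Z_notin_Fq => /eqP two0; rewrite inFqE frobZ eq_sym -subr_eq0 opprK.
by rewrite -mulr2n -mulr_natr two0 mulr0.
Qed.

Lemma frob_coords a c : a \in Fq -> c \in Fq -> (a + c * Z) ^+ q = a - c * Z.
Proof.
by move=> /eqP aq /eqP cq; rewrite frobD exprMn aq cq frobZ mulrN.
Qed.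

Lemma coordsP x : exists a c, [/\ a \in Fq, c \in Fq & x = a + c * Z].
Proof.
have tr_in : x + x ^+ q \in Fq.
  by rewrite inFqE frobD frobK addrC.
have im_in : (x - x ^+ q) / Z \in Fq.
  rewrite inFqE exprMn exprVn frobD !frobN frobK frobZ.
  by rewrite invrN mulrN -mulNr opprB.
exists ((x + x ^+ q) / 2%:R), ((x - x ^+ q) / Z / 2%:R).
split; [exact: rpred_div tr_in (rpred_nat _ _)|exact: rpred_div im_in (rpred_nat _ _)|].
by move: (x ^+ q) => y; field; rewrite two_neq0 Z_neq0.
Qed.

Lemma coords_inj a c a' c' : a \in Fq -> c \in Fq -> a' \in Fq -> c' \in Fq ->
  a + c * Z = a' + c' * Z -> a = a' /\ c = c'.
Proof.
move=> aFq cFq a'Fq c'Fq e.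
have cc' : c = c'.
  apply: contraNeq Z_notin_Fq; rewrite -subr_eq0 => cc'_nz.
  have -> : Z = (a' - a) / (c - c').
    apply: (mulIf cc'_nz); rewrite divfK //; apply/eqP; rewrite -subr_eq0; apply/eqP.
    by transitivity (a + c * Z - (a' + c' * Z)); [ring | rewrite e subrr].
  by apply: rpred_div; apply: rpredB.
by split=> //; move: e; rewrite cc' => /addIr.
Qed.

Lemma inFq_coords a c : a \in Fq -> c \in Fq -> (a + c * Z \in Fq) = (c == 0).
Proof.
move=> aFq cFq; apply/idP/eqP=> [xFq|->]; last by rewrite mul0r addr0.
by case: (coords_inj aFq cFq xFq (rpred0 _)) => //; rewrite mul0r addr0.
Qed.

Lemma card_Fq : #|[set x : F | x \in Fq]| = q.
Proof.
set S := [set x | x \in Fq].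
have inj : {in setX S S &, injective (fun ac : F * F => ac.1 + ac.2 * Z)}.
  move=> [a c] [a' c']; rewrite !inE /= => /andP[aFq cFq] /andP[a'Fq c'Fq].
  by case/coords_inj => // -> ->.
have onto : [set ac.1 + ac.2 * Z | ac in setX S S] = setT.
  apply/setP=> x; rewrite inE; have [a [c [aFq cFq ->]]] := coordsP x.
  by apply/imsetP; exists (a, c); rewrite ?inE ?aFq.
have := card_in_imset inj; rewrite onto cardsT card_F cardsX mulnn.
by move/eqP; rewrite eqn_exp2r // => /eqP.
Qed.

Lemma sqr_neq_sqrZ y : y \in Fq -> y ^+ 2 != Z ^+ 2.
Proof.
move=> yFq; rewrite eqf_sqr negb_or; apply/andP; split.
  by apply: contraNneq Z_notin_Fq => <-.
by apply: contraNneq Z_notin_Fq => yN; rewrite -[Z]opprK -yN rpredN.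
Qed.

Lemma sqrZ_mul_C1 t : t \in Fq -> t != 0 -> Z ^+ 2 * t ^+ 2 \in C1 q.
Proof.
move=> tFq t_nz; rewrite inC1 (rpredM sqrZ_in_Fq) ?rpredX //.
rewrite mulf_neq0 ?expf_neq0 ?Z_neq0 //=; apply/existsP=> -[w /andP[wFq /eqP e]].
by move: (sqr_neq_sqrZ (rpred_div wFq tFq)); rewrite expr_div_n e mulfK ?expf_neq0 ?eqxx.
Qed.

(* Squaring is 2-to-1 on F_q^*, so squares and non-squares are equinumerous,
   and multiplication by the non-square Z^2 maps the former onto the latter. *)
Lemma C1_sqrZ_mul u : u \in C1 q -> exists2 t, t \in Fq & u = Z ^+ 2 * t ^+ 2.
Proof.
set Q := @Fqstar F q; set Sq := [set y ^+ 2 | y in Q].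
have inQ := inFqstar.
have card_Q : #|Q| = (2 * #|Sq|)%N.
  apply: card_sqr_imset two_neq0 _ _; first by rewrite inQ eqxx andbF.
  by move=> y; rewrite !inQ oppr_eq0 rpredN.
have Sq_sub : Sq \subset Q.
  apply/subsetP=> _ /imsetP[y + ->]; rewrite !inQ => /andP[yFq y_nz].
  by rewrite rpredX // expf_neq0.
have card_nsq : #|Q :\: Sq| = #|Sq|.
  by rewrite cardsD (setIidPr Sq_sub) card_Q mul2n -addnn addnK.
have Z2_Sq : [set Z ^+ 2 * s | s in Sq] = Q :\: Sq.
  apply/eqP; rewrite eqEcard card_in_imset; last first.
    by move=> s s' _ _ /mulfI; apply; rewrite expf_neq0 ?Z_neq0.
  rewrite card_nsq leqnn andbT; apply/subsetP=> _ /imsetP[_ /imsetP[y yQ ->] ->].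
  move: yQ; rewrite inQ => /andP[yFq y_nz]; move: (sqrZ_mul_C1 yFq y_nz).
  rewrite inC1 in_setD inQ => /and3P[-> -> nsq]; rewrite !andbT.
  apply: contra nsq => /imsetP[w wQ ->]; apply/existsP; exists w.
  by move: wQ; rewrite inQ eqxx andbT => /andP[].
rewrite inC1 => /and3P[uFq u_nz u_nsq].
have : u \in Q :\: Sq.
  rewrite in_setD inQ uFq u_nz !andbT; move: u_nsq; apply: contraNN => /imsetP[y yQ ->].
  by apply/existsP; exists y; move: yQ; rewrite inQ eqxx andbT => /andP[].
rewrite -Z2_Sq => /imsetP[_ /imsetP[t tQ ->] ->].
by exists t => //; move: tQ; rewrite inQ => /andP[].
Qed.

Lemma Fq_sqr_in_F x : x \in Fq -> exists w, w ^+ 2 = x.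
Proof.
move=> xFq; have [/existsP[s /andP[_ /eqP s2]]|nsq] := boolP (sqFq q x); first by exists s.
have [|t _ ->] := @C1_sqrZ_mul x.
  rewrite inC1 xFq nsq andbT; apply: contraNneq nsq => ->.
  by apply/existsP; exists 0; rewrite expr0n eqxx andbT; apply: rpred0.
by exists (Z * t); rewrite exprMn.
Qed.

Section PowerMap.
Hypothesis pchar3 : (3 \in [pchar F])%N.
Local Notation alpha := (Z ^+ 2).

Lemma natr3 : 3%:R = 0 :> F.
Proof. exact: pcharf0 pchar3. Qed.

Lemma natr4 : 4%:R = 1 :> F.
Proof. by rewrite -[4%N]/(3 + 1)%N natrD natr3 add0r. Qed.

Lemma cubeB (x y : F) : (x - y) ^+ 3 = x ^+ 3 - y ^+ 3.
Proof.
have pnat3 : [pchar F].-nat 3 by rewrite (pnatE _ (isT : prime 3)).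
by rewrite exprDn_pchar // exprNn_pchar.
Qed.

Definition fpow (x : F) := x ^+ (q + 2).

Lemma fpowE x : fpow x = x ^+ q * x ^+ 2.
Proof. exact: exprD. Qed.

Lemma fpow_Fq x : x \in Fq -> fpow x = x ^+ 3.
Proof. by rewrite fpowE inFqE => /eqP->; rewrite -exprS. Qed.

Lemma fpowN x : fpow (- x) = - fpow x.
Proof. by rewrite !fpowE frobN sqrrN mulNr. Qed.

Lemma fpow_succB x : fpow (x + 1) - fpow x = 1 - (x - 1) * (x ^+ q - x).
Proof.
rewrite !fpowE frobD expr1n.
by apply: (eq_char3 natr3 (w := x ^+ q * x + x)); ring.
Qed.

Definition beta_pairs b : {set F * F} :=
  [set xy | (fpow xy.1 - fpow xy.2 == b) && (fpow (xy.1 + 1) - fpow (xy.2 + 1) == b)].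

Definition cube_pairs b : {set F * F} :=
  [set xy | [&& xy.1 \in Fq, xy.2 \in Fq & (xy.1 - xy.2) ^+ 3 == b]].

Definition fpow_sum x := fpow x + fpow (x + 1).

Definition fpow_sum_fiber b : {set F} := [set x | (x \notin Fq) && (fpow_sum x == b)].

Lemma sqr_frobB_eq (x y : F) : (x - 1) * (x ^+ q - x) = (y - 1) * (y ^+ q - y) ->
  (x ^+ q - x) ^+ 2 = (y ^+ q - y) ^+ 2.
Proof.
move=> e; have /(congr1 (fun t => t ^+ q)) := e.
rewrite !exprMn !frobD !frobN !frobK expr1n => eq.
transitivity (- ((x - 1) * (x ^+ q - x) + (x ^+ q - 1) * (x - x ^+ q))); first ring.
by rewrite e eq; ring.
Qed.

Lemma fpow_succB_eq x y : fpow (x + 1) - fpow x = fpow (y + 1) - fpow y ->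
  [|| (x \in Fq) && (y \in Fq), y == x | y == -1 - x].
Proof.
rewrite !fpow_succB => /addrI /oppr_inj e.
have [xFq|x_notFq] := boolP (x \in Fq).
  have := sqr_frobB_eq e; rewrite (eqP xFq) subrr expr0n => /esym/eqP.
  by rewrite sqrf_eq0 subr_eq0 -inFqE => ->.
have tr_nz : x ^+ q - x != 0 by rewrite subr_eq0.
have /eqP := sqr_frobB_eq e; rewrite eqf_sqr => /orP[/eqP same|/eqP opp].
  by move: e; rewrite -same => /(mulIf tr_nz) /addIr ->; rewrite eqxx orbT.
move: e; rewrite -[y ^+ q - y]opprK -opp mulrN -mulNr => /(mulIf tr_nz) xy.
suff -> : y = -1 - x by rewrite eqxx !orbT.
have -> : y = - (x - 1) + 1 by rewrite xy opprK subrK.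
by apply: (eq_char3 natr3 (w := 1)); ring.
Qed.

Lemma mem_beta_pairs b x y : b != 0 ->
  ((x, y) \in beta_pairs b) =
  [&& x \in Fq, y \in Fq & (x - y) ^+ 3 == b] || [&& x \notin Fq, y == -1 - x & fpow_sum x == b].
Proof.
move=> b_nz; rewrite in_set /=; apply/andP/orP=> [[/eqP fxy /eqP fxy1]|].
  have : fpow (x + 1) - fpow x = fpow (y + 1) - fpow y.
    by rewrite -[fpow (x + 1)](subrK (fpow (y + 1))) fxy1 -fxy; ring.
  move/fpow_succB_eq; have [xFq|x_notFq] := boolP (x \in Fq).
    move=> xy_cases; have yFq : y \in Fq.
      by case/or3P: xy_cases => [/andP[_ ->]|/eqP->|/eqP->] //; rpred_auto.
    by left; rewrite yFq cubeB -!fpow_Fq // fxy eqxx.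
  case/or3P=> [//|/eqP yx|/eqP yE]; first by move: b_nz; rewrite -fxy yx subrr eqxx.
  by right; rewrite yE eqxx /fpow_sum -fxy yE -opprD fpowN opprK (addrC 1 x) eqxx.
case=> [/and3P[xFq yFq /eqP xy3]|/and3P[_ /eqP-> /eqP fs]]; apply/andP.
  rewrite !fpow_Fq ?rpredD ?rpred1 // -!cubeB xy3 eqxx /=.
  by rewrite opprD addrACA subrr addr0 xy3.
have -> : -1 - x + 1 = - x by ring.
have -> : -1 - x = - (x + 1) by ring.
by rewrite !fpowN !opprK -fs /fpow_sum eqxx addrC eqxx.
Qed.

Local Notation nrm a c := (a ^+ 2 - alpha * c ^+ 2).

Lemma fpow_sum_coords a c : a \in Fq -> c \in Fq ->
  fpow_sum (1 + a + c * Z) = - (a * nrm a c) + (- (c * (nrm a c + 1))) * Z.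
Proof.
move=> aFq cFq; have xq : (1 + a + c * Z) ^+ q = 1 + a - c * Z.
  by rewrite frob_coords ?rpredD ?rpred1.
rewrite /fpow_sum !fpowE xq frobD xq expr1n.
apply: (eq_char3 natr3 (w := 3%:R + 2%:R * Z * a * c + Z * a ^+ 2 * c + 2%:R * Z * c
  - Z ^+ 2 * a * c ^+ 2 - Z ^+ 2 * c ^+ 2 - Z ^+ 3 * c ^+ 3 + 5%:R * a + 3%:R * a ^+ 2 + a ^+ 3)).
ring.
Qed.

(* The coordinates (a, c) of the points 1 + a + c Z of [fpow_sum_fiber (b1 + b2 Z)]. *)
Definition coord_sols b1 b2 : {set F * F} :=
  [set ac | [&& ac.1 \in Fq, ac.2 \in Fq, ac.2 != 0,
             - (ac.1 * nrm ac.1 ac.2) == b1 & - (ac.2 * (nrm ac.1 ac.2 + 1)) == b2]].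

Lemma card_fpow_sum_fiber b1 b2 : b1 \in Fq -> b2 \in Fq ->
  #|fpow_sum_fiber (b1 + b2 * Z)| = #|coord_sols b1 b2|.
Proof.
move=> b1Fq b2Fq.
have -> : fpow_sum_fiber (b1 + b2 * Z) = [set 1 + ac.1 + ac.2 * Z | ac in coord_sols b1 b2].
  apply/setP=> x; rewrite in_set; apply/andP/imsetP=> [[x_notFq /eqP fs]|[[a c]]].
    have [a [c [aFq cFq xE]]] := coordsP (x - 1).
    have {}xE : x = 1 + a + c * Z by rewrite -addrA -xE addrC subrK.
    have c_nz : c != 0.
      by apply: contraNneq x_notFq => c0; rewrite xE c0 mul0r addr0 rpredD ?rpred1.
    exists (a, c) => //; rewrite in_set /= aFq cFq c_nz.
    move: fs; rewrite xE fpow_sum_coords // => /coords_inj[]; try by rpred_auto.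
    by move=> -> ->; rewrite !eqxx.
  rewrite in_set /= => /and5P[aFq cFq c_nz /eqP e1 /eqP e2] ->.
  rewrite inFq_coords ?rpredD ?rpred1 // c_nz fpow_sum_coords // e1 e2.
  by rewrite eqxx.
rewrite card_in_imset // => -[a c] [a' c']; rewrite !in_set /=.
move=> /and5P[aFq cFq _ _ _] /and5P[a'Fq c'Fq _ _ _] e.
have [] := coords_inj _ cFq _ c'Fq e; rewrite ?rpredD ?rpred1 //.
by move=> /addrI -> ->.
Qed.

Lemma card_coord_sols_real c0 : c0 \in Fq -> c0 != 0 ->
  #|coord_sols c0 0| = if c0 ^+ 2 + 1 \in C1 q then 2%N else 0%N.
Proof.
move=> c0Fq c0_nz.
have memE a c : ((a, c) \in coord_sols c0 0) =
    [&& a == c0, c \in Fq, c != 0 & alpha * c ^+ 2 == c0 ^+ 2 + 1].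
  rewrite in_set /=; apply/and5P/and4P=> [[aFq cFq c_nz /eqP e1 /eqP e2]|].
    have N1 : nrm a c = -1.
      apply/eqP; rewrite -addr_eq0; move/eqP: e2.
      by rewrite oppr_eq0 mulf_eq0 (negPf c_nz).
    have ac0 : a = c0 by rewrite -e1 N1 mulrN1 opprK.
    split=> //; first by rewrite ac0.
    by apply/eqP; rewrite -[1]opprK -N1 ac0; ring.
  case=> /eqP-> cFq c_nz /eqP e; have N1 : nrm c0 c = -1 by rewrite e; ring.
  by split=> //; rewrite N1 ?mulrN1 ?opprK ?addNr ?mulr0 ?oppr0.
case: ifPn => [c0_C1|notC1]; last first.
  apply/eqP; rewrite cards_eq0; apply/eqP/setP=> -[a c]; rewrite memE in_set0.
  by apply: contraNF notC1 => /and4P[_ cFq c_nz /eqP <-]; apply: sqrZ_mul_C1.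
have [t tFq tE] := C1_sqrZ_mul c0_C1.
have t_nz : t != 0.
  by apply: contraTneq c0_C1 => t0; rewrite tE t0 expr0n mulr0 inC1 eqxx andbF.
have -> : coord_sols c0 0 = [set (c0, t); (c0, - t)].
  apply/setP=> -[a c]; rewrite memE in_set2 !xpair_eqE tE.
  rewrite (inj_eq (mulfI (expf_neq0 2 Z_neq0))) eqf_sqr -andb_orr.
  case: (a == c0) => //=; apply/and3P/idP=> [[_ _ //]|/orP[]/eqP->].
    by split; rewrite ?eqxx.
  by split; rewrite ?rpredN ?oppr_eq0 ?eqxx ?orbT.
by rewrite cards2 xpair_eqE eqxx neqrN ?two_neq0.
Qed.

Lemma sqrZ_cube_subr_inj : {in Fq &, injective (fun c => alpha * c ^+ 3 - c)}.
Proof.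
move=> c c' cFq c'Fq /= e; apply/eqP; rewrite -subr_eq0; apply/negPn/negP => cc'_nz.
have h : alpha * (c - c') ^+ 2 = 1.
  apply: (mulIf cc'_nz); rewrite mul1r -mulrA -exprSr cubeB.
  apply/eqP; rewrite -subr_eq0; apply/eqP.
  by transitivity (alpha * c ^+ 3 - c - (alpha * c' ^+ 3 - c')); [ring | rewrite e subrr].
have cc'_inv : (c - c')^-1 \in Fq by rewrite rpredV rpredB.
have /negP := sqr_neq_sqrZ cc'_inv; apply.
by rewrite exprVn -[alpha](mulfK (expf_neq0 2 cc'_nz)) h mul1r.
Qed.

Lemma card_coord_sols_imag d : d \in Fq -> d != 0 -> #|coord_sols 0 d| = 1%N.
Proof.
move=> dFq d_nz; set S := [set x : F | x \in Fq].
have [c cS cE] : exists2 c, c \in S & alpha * c ^+ 3 - c = d.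
  apply: in_onto_of_inj; rewrite ?in_set //.
    by move=> x; rewrite !in_set => xFq; rpred_auto.
  by move=> x y; rewrite !in_set; apply: sqrZ_cube_subr_inj.
move: cS; rewrite in_set => cFq.
have c_nz : c != 0 by apply: contraNneq d_nz => c0; rewrite -cE c0 expr0n mulr0 subrr.
suff -> : coord_sols 0 d = [set (0, c)] by rewrite cards1.
apply/setP=> -[a c']; rewrite in_set1 xpair_eqE in_set /=.
apply/and5P/andP=> [[aFq c'Fq c'_nz /eqP e1 /eqP e2]|[/eqP-> /eqP->]].
  have a0 : a = 0.
    move/eqP: e1; rewrite oppr_eq0 mulf_eq0 subr_eq0 => /orP[/eqP //|/eqP e].
    have /negP := sqr_neq_sqrZ (rpred_div aFq c'Fq); case.
    by rewrite expr_div_n e mulfK ?expf_neq0.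
  split; apply/eqP => //; apply: sqrZ_cube_subr_inj => //=.
  by rewrite cE -e2 a0; ring.
split=> //; first exact: rpred0.
  by rewrite mul0r oppr0.
by apply/eqP; rewrite -cE; ring.
Qed.

Definition Fq_roots (p : {poly F}) : {set F} := [set n | (n \in Fq) && root p n].

Lemma quintic_split_Fq c0 A r1 r2 r3 u w :
  c0 \in Fq -> c0 != 0 -> A \in Fq -> A != 0 ->
  r1 \in Fq -> r2 \in Fq -> r3 \in Fq -> u \in Fq -> w ^+ 2 \in Fq ->
  quintic (c0 ^+ 2) A =
    ('X - r1%:P) * ('X - r2%:P) * ('X - r3%:P) * ('X - (u + w)%:P) * ('X - (u - w)%:P) ->
  w \in Fq /\ uniq [:: r1; r2; r3; u + w; u - w].
Proof.
move=> c0Fq c0_nz AFq A_nz r1Fq r2Fq r3Fq uFq w2Fq pE.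
have D := quintic_discr natr3 A_nz pE.
have D_nz : discr5 r1 r2 r3 (u + w) (u - w) != 0 by rewrite D mulf_neq0 ?expf_neq0.
split; last exact: discr5_uniq.
(* The discriminant c0^2 A^4 is also Y^2 w^2 with Y in F_q. *)
pose Y := (r1 - r2) * (r1 - r3) * (r2 - r3)
  * ((r1 - u) ^+ 2 - w ^+ 2) * ((r2 - u) ^+ 2 - w ^+ 2) * ((r3 - u) ^+ 2 - w ^+ 2).
have DY : discr5 r1 r2 r3 (u + w) (u - w) = Y ^+ 2 * w ^+ 2.
  have two_w : (2%:R * w) ^+ 2 = w ^+ 2 by rewrite exprMn -natrX natr4 mul1r.
  by rewrite -two_w /discr5 /Y; ring.
have Y_nz : Y != 0 by apply: contraNneq D_nz; rewrite DY => ->; rewrite expr0n mul0r.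
have YFq : Y \in Fq by rewrite /Y; rpred_auto.
have : w ^+ 2 == (c0 * A ^+ 2 / Y) ^+ 2.
  rewrite expr_div_n (_ : (c0 * A ^+ 2) ^+ 2 = c0 ^+ 2 * A ^+ 4); last by ring.
  by rewrite -D DY [Y ^+ 2 * _]mulrC mulfK ?expf_neq0.
by rewrite eqf_sqr => /orP[] /eqP->; rpred_auto.
Qed.

Lemma card_quintic_roots c0 A : c0 \in Fq -> c0 != 0 -> A \in Fq -> A != 0 ->
  #|Fq_roots (quintic (c0 ^+ 2) A)| \in [:: 0; 1; 2; 5]%N.
Proof.
move=> c0Fq c0_nz AFq A_nz; set R := Fq_roots _.
case: (leqP #|R| 2) => [|R_gt2]; first by case: #|R| => [|[|[|]]].
have [r1 [r2 [r3 [r1R r2R r3R /and3P[n12 n13 n23]]]]] := card_gt2_distinct R_gt2.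
move: r1R r2R r3R; rewrite !in_set => /andP[r1Fq p1] /andP[r2Fq p2] /andP[r3Fq p3].
have /= factor3 := quintic_factor3 n12 n13 n23 p1 p2 p3.
set u := r1 + r2 + r3 + 2%:R in factor3.
set v := 1 + (r1 + r2 + r3) * u - (r1 * r2 + r1 * r3 + r2 * r3) in factor3.
have uFq : u \in Fq by rewrite /u; rpred_auto.
have deltaFq : u ^+ 2 - v \in Fq by rewrite /v; rpred_auto.
have [w w2] := Fq_sqr_in_F deltaFq.
have pE : quintic (c0 ^+ 2) A =
    ('X - r1%:P) * ('X - r2%:P) * ('X - r3%:P) * ('X - (u + w)%:P) * ('X - (u - w)%:P).
  by rewrite factor3 (quadratic_split natr3 w2) !mulrA.
have [|wFq uniq5] := quintic_split_Fq c0Fq c0_nz AFq A_nz r1Fq r2Fq r3Fq uFq _ pE.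
  by rewrite w2.
have R5 : R =i [:: r1; r2; r3; u + w; u - w].
  move=> n; rewrite in_set pE !rootM !root_XsubC !inE -!orbA.
  apply/andP/idP=> [[] //|n_in]; split=> //.
  by move: n_in => /or4P[| | |/orP[]] /eqP->; rpred_auto.
by rewrite (eq_card R5) (card_uniqP uniq5).
Qed.

Lemma card_coord_sols c0 d : c0 \in Fq -> c0 != 0 -> d \in Fq -> d != 0 ->
  #|coord_sols c0 d| = #|Fq_roots (quintic (c0 ^+ 2) (alpha * d ^+ 2))|.
Proof.
move=> c0Fq c0_nz dFq d_nz; set R := Fq_roots _.
have root_nz n : n \in R -> [/\ n \in Fq, n != 0 & n + 1 != 0].
  rewrite in_set => /andP[nFq pn]; split=> //.
    apply: contraTneq pn => ->; rewrite rootE horner_quintic.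
    by rewrite (_ : _ + _ = - c0 ^+ 2) ?oppr_eq0 ?expf_neq0 //; ring.
  apply: contraTneq pn => /eqP; rewrite addr_eq0 => /eqP->; rewrite rootE horner_quintic.
  by rewrite (_ : _ + _ = alpha * d ^+ 2) ?mulf_neq0 ?expf_neq0 ?Z_neq0 //; ring.
have -> : coord_sols c0 d = [set (- c0 / n, - d / (n + 1)) | n in R].
  apply/setP=> -[a c]; rewrite in_set /=.
  apply/and5P/imsetP=> [[aFq cFq c_nz /eqP e1 /eqP e2]|[n nR [-> ->]]].
    have N_nz : nrm a c != 0 by apply: contraNneq c0_nz => N0; rewrite -e1 N0 mulr0 oppr0.
    have N1_nz : nrm a c + 1 != 0 by apply: contraNneq d_nz => N0; rewrite -e2 N0 mulr0 oppr0.
    exists (nrm a c); last by rewrite -e1 -e2 !opprK !mulfK.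
    rewrite in_set rootE horner_quintic -e1 -e2; apply/andP; split; first by rpred_auto.
    by apply/eqP; ring.
  have [nFq n_nz n1_nz] := root_nz n nR.
  have hn : nrm (- c0 / n) (- d / (n + 1)) = n.
    move: nR; rewrite in_set rootE horner_quintic => /andP[_ /eqP pn].
    apply/eqP; rewrite -subr_eq0; apply/eqP.
    transitivity (- ((n ^+ 3 - c0 ^+ 2) * (n + 1) ^+ 2 + alpha * d ^+ 2 * n ^+ 2)
                  / (n ^+ 2 * (n + 1) ^+ 2)).
      by field; rewrite n_nz n1_nz.
    by rewrite pn oppr0 mul0r.
  split; try by rpred_auto.
  - by rewrite mulf_neq0 ?oppr_eq0 ?invr_eq0.
  - by rewrite hn divfK // opprK.
  - by rewrite hn divfK // opprK.
rewrite card_in_imset // => n n' nR n'R [] e _.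
have [_ n_nz _] := root_nz n nR; have [_ n'_nz _] := root_nz n' n'R.
by move: e; rewrite !mulNr => /oppr_inj/(mulfI c0_nz)/invr_inj.
Qed.

Lemma betaf_fpow b : b != 0 ->
  betaf fpow 1 b = (#|cube_pairs b| + #|fpow_sum_fiber b|)%N.
Proof.
move=> b_nz; rewrite /betaf -/(beta_pairs b).
have -> : beta_pairs b = cube_pairs b :|: [set (x, -1 - x) | x in fpow_sum_fiber b].
  apply/setP=> -[x y]; rewrite mem_beta_pairs // in_setU in_set; congr (_ || _).
  apply/idP/imsetP=> [/and3P[x_notFq /eqP-> fs]|[x' x'_in [-> ->]]].
    by exists x; rewrite // in_set x_notFq.
  by move: x'_in; rewrite in_set eqxx.
rewrite cardsU card_imset; last by move=> x x' [].
suff -> : cube_pairs b :&: [set (x, -1 - x) | x in fpow_sum_fiber b] = set0.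
  by rewrite cards0 subn0.
apply/setP=> -[x y]; rewrite in_setI in_set0 in_set /=.
apply/negP=> /andP[/and3P[xFq _ _] /imsetP[x' x'_in [xx' _]]].
by move: x'_in; rewrite in_set -xx' xFq.
Qed.

Lemma card_cube_pairs b : #|cube_pairs b| = if b \in Fq then q else 0%N.
Proof.
have [bFq|b_notFq] := ifPn; last first.
  apply/eqP; rewrite cards_eq0; apply/eqP/setP=> -[x y]; rewrite in_set in_set0 /=.
  apply: contraNF b_notFq => /and3P[xFq yFq /eqP <-].
  by rewrite rpredX ?rpredB.
set S := [set x : F | x \in Fq].
have [t tFq t3] : exists2 t, t \in Fq & t ^+ 3 = b.
  have cube_inj : {in S &, injective (fun x => x ^+ 3)}.
    move=> x y _ _ /eqP; rewrite -subr_eq0 -cubeB expf_eq0 /= subr_eq0.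
    by move/eqP.
  have cube_S : {in S, forall x, x ^+ 3 \in S}.
    by move=> x; rewrite !in_set => xFq; apply: rpredX.
  have bS : b \in S by rewrite in_set.
  by have [t] := in_onto_of_inj cube_S cube_inj bS; rewrite in_set; exists t.
have -> : cube_pairs b = [set (y + t, y) | y in S].
  apply/setP=> -[x y]; rewrite in_set /=; apply/and3P/imsetP=> [[xFq yFq /eqP xy3]|].
    exists y; rewrite ?in_set //; congr (_, _).
    have /eqP : (x - y - t) ^+ 3 = 0 by rewrite cubeB xy3 t3 subrr.
    by rewrite expf_eq0 /= subr_eq0 => /eqP <-; rewrite addrC subrK.
  case=> y'; rewrite in_set => y'Fq [-> ->].
  by split; rewrite ?rpredD // (addrC y' t) addrK t3.
by rewrite card_imset ?card_Fq // => y y' [].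
Qed.

Lemma betaf_fpow_real c : c \in Fqstar q ->
  betaf fpow 1 c = if c ^+ 2 + 1 \in C1 q then (q + 2)%N else q.
Proof.
rewrite inFqstar => /andP[cFq c_nz].
rewrite betaf_fpow // card_cube_pairs cFq -[c in fpow_sum_fiber c]addr0 -(mul0r Z).
rewrite card_fpow_sum_fiber ?rpred0 // card_coord_sols_real //.
by case: ifP; rewrite ?addn0.
Qed.

Lemma betaf_fpow_imag d : d \in Fqstar q -> betaf fpow 1 (d * Z) = 1%N.
Proof.
rewrite inFqstar => /andP[dFq d_nz].
rewrite betaf_fpow ?mulf_neq0 ?Z_neq0 // card_cube_pairs -[d * Z]add0r.
by rewrite inFq_coords ?rpred0 // (negPf d_nz) card_fpow_sum_fiber ?rpred0 // card_coord_sols_imag.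
Qed.

Lemma betaf_fpow_mixed c d : c \in Fqstar q -> d \in Fqstar q ->
  betaf fpow 1 (c + d * Z) \in [:: 0; 1; 2; 5]%N.
Proof.
rewrite !inFqstar => /andP[cFq c_nz] /andP[dFq d_nz].
have b_nz : c + d * Z != 0.
  by apply: contraNneq d_nz => b0; have := inFq_coords cFq dFq; rewrite b0 rpred0 => <-.
rewrite betaf_fpow // card_cube_pairs inFq_coords // (negPf d_nz) add0n.
rewrite card_fpow_sum_fiber // card_coord_sols // card_quintic_roots //.
  by rpred_auto.
by rewrite mulf_neq0 ?expf_neq0 ?Z_neq0.
Qed.

End PowerMap.
End QuadraticExtension.
End FrobeniusSubfield.

Theorem proposition8 (F : finFieldType) (m q : nat) (hm : (0 < m)%N)
  (hq : q = (3 ^ m)%N) (hF : #|F| = (q ^ 2)%N)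
  (alpha Z : F) (halpha : alpha \in @C1 F q)
  (hZq : ~~ @inFq F q Z) (hZ2 : Z ^+ 2 = alpha) :
  let f := fun x : F => x ^+ (q + 2) in
  let beta := fun b : F => betaf f 1 (b / 4%:R) in
  (forall c : F, c \in @Fqstar F q ->
     beta c = (if c ^+ 2 + 1 \in @C1 F q then (q + 2)%N else q))
  /\ ((forall d : F, d \in @Fqstar F q -> beta (d * Z) = 1%N) /\ (0 < nu f 1)%N)
  /\ (forall c d : F, c \in @Fqstar F q -> d \in @Fqstar F q ->
        beta (c + d * Z) \in [:: 0%N; 1%N; 2%N; 5%N]).
Proof.
(* [hm] is implied by [hF], and of [halpha] only [alpha \in F_q] is needed:
   that alpha is a non-square follows from [hZq]. *)
move=> f beta; subst alpha.
have pchar3 : (3 \in [pchar F])%N.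
  by apply: (card_finPcharP (n := m * 2)); rewrite // hF hq expnM.
have q_pchar : [pchar F].-nat q by rewrite hq pnatX (pnatE _ (isT : prime 3)) pchar3.
have sqrZ_in_Fq : Z ^+ 2 \in inFq q by move: halpha; rewrite inE => /and3P[].
have betaE b : beta b = betaf f 1 b by rewrite /beta (natr4 pchar3) divr1.
have imag d : d \in Fqstar q -> beta (d * Z) = 1%N.
  by rewrite betaE; apply: (betaf_fpow_imag q_pchar hF hZq sqrZ_in_Fq pchar3).
split; last split.
- by move=> c; rewrite betaE; apply: (betaf_fpow_real q_pchar hF hZq sqrZ_in_Fq pchar3).
- split=> //; apply/card_gt0P; exists Z.
  rewrite inE (Z_neq0 q_pchar hZq) -(mul1r Z) -betaE imag //.
  by rewrite inFqstar oner_eq0 rpred1.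
- by move=> c d; rewrite betaE; apply: (betaf_fpow_mixed q_pchar hF hZq sqrZ_in_Fq pchar3).
Qed.
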